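(* Let $h,b>0$, $\rho=b/(h+b)$, cost $c(x,d)=h(x-d)^++b(d-x)^+$. For $\theta\in[0,1/2]$ let $F_{\theta,1}$ be the CDF of the uniform distribution on $[\theta,1]$, and let $\mathcal F_u=\{F_{\theta,1}:\theta\in[0,1/2]\}$. For a demand CDF $F$ let $C_F(x)=\mathbb{E}_{D\sim F}[c(x,D)]$ and $x_F^*=\arg\min_xC_F(x)$. An admissible policy $\pi=(\pi_t)_{t\ge1}$ maps, in period $t$, the history of $t$ i.i.d. demand samples $(d_1,\dots,d_t)$ from $F$ to an order quantity $x_t^\pi$; let $\Pi$ be the set of admissible policies and $\mathcal R^\pi(F,T)=\sum_{t=1}^T\mathbb{E}[C_F(x_t^\pi)-C_F(x_F^* )]$. Then for every $T\ge1$, $$\inf_{\pi\in\Pi}\sup_{F\in\mathcal F_u}\mathcal R^\pi(F,T)\le(\rho^2+(1-\rho)^2)(h+b).$$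
   Context: Data-driven repeated newsvendor problem with linear overage cost $h$ and underage cost $b$; expectations are over demand samples and any randomness of the policy. *)

From HB Require Import structures.
From mathcomp Require Import all_boot all_order all_algebra.
From mathcomp Require Import all_classical all_reals all_analysis.
Set Implicit Arguments. Unset Strict Implicit. Unset Printing Implicit Defensive.
Import Order.TTheory GRing.Theory Num.Theory.
Local Open Scope classical_set_scope.
Local Open Scope ring_scope.

Section newsvendor.
Context (R : realType).
Local Notation mu := (@lebesgue_measure R).

Definition nv_cost (h b x d : R) : R :=
  h * Num.max (x - d) 0 + b * Num.max (d - x) 0.

Definition unifE (theta : R) (g : R -> \bar R) : \bar R :=
  (\int[mu]_x ((uniform_pdf theta 1 x)%:E * g x))%E.

(* expectation over t i.i.d. Uniform[theta,1] samples (d_1,...,d_t),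
   written as an iterated integral (equal to the product-measure integral
   by Tonelli for nonnegative measurable integrands) *)
Fixpoint iidE (theta : R) (t : nat) : (t.-tuple R -> \bar R) -> \bar R :=
  match t return (t.-tuple R -> \bar R) -> \bar R with
  | 0 => fun g => g [tuple]
  | t'.+1 => fun g => unifE theta (fun x => iidE theta (fun s => g (cons_tuple x s)))
  end.

Definition expCost (h b theta x : R) : \bar R :=
  unifE theta (fun d => (nv_cost h b x d)%:E).

Definition optCost (h b theta : R) : \bar R :=
  ereal_inf (range (expCost h b theta)).

Definition policy := forall t : nat, t.-tuple R -> R.

Definition admissible : set policy :=
  [set pi | forall t, measurable_fun setT (pi t)].

Definition regret (h b : R) (pi : policy) (theta : R) (T : nat) : \bar R :=
  (\sum_(1 <= t < T.+1)
     iidE theta (fun s : t.-tuple R => expCost h b theta (pi t s) - optCost h b theta))%E.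

Definition worst_regret (h b : R) (pi : policy) (T : nat) : \bar R :=
  ereal_sup [set regret h b pi theta T | theta in `[0, 2^-1]].

Definition minimax_regret (h b : R) (T : nat) : \bar R :=
  ereal_inf [set worst_regret h b pi T | pi in admissible].

End newsvendor.

From HB Require Import structures.
From mathcomp Require Import all_boot all_order all_algebra.
From mathcomp Require Import all_classical all_reals all_analysis.
From mathcomp Require Import measurable_realfun.
From mathcomp.algebra_tactics Require Import ring lra.

(* Order x_t = m_t + rho (1 - m_t), where m_t is the smallest demand observed
   so far.  For demand uniform on [theta, 1] the expected cost on [theta, 1]
   is the quadratic (h (x - theta)^2 + b (1 - x)^2) / (2 (1 - theta)), whose
   minimiser is x* = theta + rho (1 - theta); as x_t - x* = (1 - rho) (m_t - theta),
   the regret of period t is (h + b) (1 - rho)^2 E[(m_t - theta)^2] / (2 (1 - theta)).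
   The second moment of the minimum of t uniform samples is
   2 (1 - theta)^2 (1/(t+1) - 1/(t+2)), so the regrets telescope to at most
   (h + b) (1 - rho)^2 / 2, whatever theta and T. *)

Set Implicit Arguments. Unset Strict Implicit. Unset Printing Implicit Defensive.
Import Order.TTheory GRing.Theory Num.Theory numFieldNormedType.Exports.
Local Open Scope classical_set_scope.
Local Open Scope ring_scope.

Lemma ge0_le_integralT d (T : measurableType d) (R : realType)
    (mu : {measure set T -> \bar R}) (f g : T -> \bar R) :
  (forall x, 0 <= f x)%E -> (forall x, f x <= g x)%E ->
  (\int[mu]_x f x <= \int[mu]_x g x)%E.
Proof.
move=> f0 fg; have g0 x : (0 <= g x)%E := le_trans (f0 x) (fg x).
rewrite (ge0_integralTE _ f0) (ge0_integralTE _ g0).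
apply: ereal_sup_le => _ [s /= sf <-]; exists s => //= x.
exact: le_trans (sf x) (fg x).
Qed.

Section interval_integrals.
Context (R : realType).
Local Notation mu := (@lebesgue_measure R).

Lemma integral_itv_split (f : R -> \bar R) (a m c : R) :
  a <= m -> m <= c -> measurable_fun setT f ->
  (\int[mu]_(x in `[a, c]) f x =
   \int[mu]_(x in `[a, m]) f x + \int[mu]_(x in `[m, c]) f x)%E.
Proof.
move=> am mc mf.
rewrite (@itv_bndbnd_setU _ _ (BLeft a) (BRight m) (BRight c)) ?bnd_simp //.
rewrite integral_setU //; first last.
- rewrite disj_set2E; apply/eqP/seteqP; split => // z [] /=.
  by rewrite !in_itv /= => /andP[_ zm] /andP[mz _]; lra.
- exact: measurable_funS mf.
by rewrite integral_itv_obnd_cbnd //; exact: measurable_funS mf.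
Qed.

Lemma integral_itv_deriv_horner (P : {poly R}) (f : R -> R) (a c : R) :
  a <= c -> {in `[a, c], f =1 horner P^`()} ->
  (\int[mu]_(x in `[a, c]) (f x)%:E = (P.[c] - P.[a])%:E)%E.
Proof.
rewrite le_eqVlt => /predU1P[<- _|ac fP].
  by rewrite set_itv1 integral_set1 subrr.
transitivity (\int[mu]_(x in `[a, c]) ((P^`()).[x])%:E)%E.
  by apply: eq_integral => x /[!inE] /fP ->.
rewrite (continuous_FTC2 (F := horner P) ac) ?EFinB //.
- by apply: continuous_subspaceT => x; exact: continuous_horner.
- split; first by move=> x _; exact: derivable_horner.
  + exact/cvg_at_right_filter/continuous_horner.
  + exact/cvg_at_left_filter/continuous_horner.
- by move=> x _; rewrite -derivE.
Qed.

End interval_integrals.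

Section uniform_expectation.
Context (R : realType) (theta : R).
Hypothesis theta_lt1 : theta < 1.
Local Notation mu := (@lebesgue_measure R).
Local Notation in_support x := (theta <= x <= 1).

Definition tuple_in_support {n} (s : n.-tuple R) := all (fun x => in_support x) s.

Let w_gt0 : 0 < 1 - theta. Proof. by rewrite subr_gt0. Qed.

Lemma unifE_le (F G : R -> \bar R) :
  (forall x, in_support x -> 0 <= F x)%E ->
  (forall x, in_support x -> F x <= G x)%E ->
  (unifE theta F <= unifE theta G)%E.
Proof.
move=> F0 FG; apply: ge0_le_integralT => x; rewrite /uniform_pdf.
  case: ifP => [xS|_]; rewrite ?mul0e //.
  by apply: mule_ge0; [rewrite lee_fin invr_ge0 ltW | exact: F0].
case: ifP => [xS|_]; rewrite ?mul0e //.
by apply: lee_wpmul2l; [rewrite lee_fin invr_ge0 ltW | exact: FG].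
Qed.

Lemma unifE_ge0 (F : R -> \bar R) :
  (forall x, in_support x -> 0 <= F x)%E -> (0 <= unifE theta F)%E.
Proof.
move=> F0; apply: integral_ge0 => x _; rewrite /uniform_pdf.
case: ifP => [xS|_]; rewrite ?mul0e //.
by apply: mule_ge0; [rewrite lee_fin invr_ge0 ltW | exact: F0].
Qed.

Lemma iidE_ge0 n (f : n.-tuple R -> \bar R) :
  (forall s, tuple_in_support s -> 0 <= f s)%E -> (0 <= iidE theta f)%E.
Proof.
elim: n f => [|n IH] f f0 /=; first exact: f0.
apply: unifE_ge0 => x xS; apply: IH => s sS.
by apply: f0; rewrite /tuple_in_support /= xS.
Qed.

Lemma iidE_le n (f g : n.-tuple R -> \bar R) :
  (forall s, tuple_in_support s -> 0 <= f s)%E ->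
  (forall s, tuple_in_support s -> f s <= g s)%E ->
  (iidE theta f <= iidE theta g)%E.
Proof.
elim: n f g => [|n IH] f g f0 fg /=; first exact: fg.
have cons_in x s : in_support x -> tuple_in_support s ->
    tuple_in_support (cons_tuple x s) by rewrite /tuple_in_support /= => ->.
apply: unifE_le => x xS.
  by apply: iidE_ge0 => s sS; exact/f0/cons_in.
by apply: IH => s sS; [exact/f0/cons_in | exact/fg/cons_in].
Qed.

Lemma unifE_split (f : R -> R) (a : R) : measurable_fun setT f -> in_support a ->
  unifE theta (fun x => (f x)%:E) =
  (\int[mu]_(x in `[theta, a]) ((1 - theta)^-1 * f x)%:E +
   \int[mu]_(x in `[a, 1%R]) ((1 - theta)^-1 * f x)%:E)%E.
Proof.
move=> mf /andP[ta a1]; rewrite -integral_itv_split //; last first.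
  by apply/measurable_EFinP; exact: measurable_funM.
rewrite /unifE [RHS]integral_mkcond; apply: eq_integral => x _.
rewrite patchE /uniform_pdf EFinM.
have -> : (x \in `[theta, 1%R]%classic) = in_support x.
  by apply/idP/idP => [/set_mem|xS]; [rewrite /= in_itv | apply/mem_set; rewrite /= in_itv].
by case: ifP; rewrite ?mul0e.
Qed.

Lemma unifE_horner_min (P : {poly R}) (a : R) : in_support a ->
  unifE theta (fun x => ((P^`()).[Num.min a x])%:E) =
  ((1 - theta)^-1 * (P.[a] - P.[theta] + (P^`()).[a] * (1 - a)))%:E.
Proof.
move=> /[dup] aS /andP[ta a1]; rewrite (unifE_split _ aS); last first.
  apply: measurableT_comp; last exact: measurable_minr.
  by apply: continuous_measurable_fun => x; exact: continuous_horner.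
rewrite (@integral_itv_deriv_horner _ ((1 - theta)^-1 *: P)) //; last first.
  by move=> x /[!in_itv] /andP[_ xa]; rewrite derivZ hornerZ min_r.
rewrite (@integral_itv_deriv_horner _ (((1 - theta)^-1 * (P^`()).[a]) *: 'X)) //; last first.
  by move=> x /[!in_itv] /andP[ax _]; rewrite min_l // derivZ derivX hornerZ hornerC mulr1.
by rewrite -EFinD !hornerZ !hornerX; congr EFin; ring.
Qed.

End uniform_expectation.

Section newsvendor_cost.
Context (R : realType) (h b : R).

Lemma nv_cost_under x d : x <= d -> nv_cost h b x d = b * (d - x).
Proof.
move=> xd; rewrite /nv_cost max_r ?subr_le0 // max_l ?subr_ge0 //.
by rewrite mulr0 add0r.
Qed.

Lemma nv_cost_over x d : d <= x -> nv_cost h b x d = h * (x - d).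
Proof.
move=> dx; rewrite /nv_cost max_l ?subr_ge0 // max_r ?subr_le0 //.
by rewrite mulr0 addr0.
Qed.

Lemma measurable_nv_cost x : measurable_fun setT (nv_cost h b x).
Proof.
by apply: measurable_funD; apply: measurable_funM => //;
  apply: measurable_maxr => //; exact: measurable_funB.
Qed.

Hypotheses (h_ge0 : 0 <= h) (b_ge0 : 0 <= b).

Lemma nv_cost_ge0 x d : 0 <= nv_cost h b x d.
Proof. by rewrite /nv_cost addr_ge0 // mulr_ge0 // le_max lexx orbT. Qed.

Lemma nv_cost_toward x y d : (y <= x <= d) || (d <= x <= y) ->
  nv_cost h b x d <= nv_cost h b y d.
Proof.
case/orP => /andP[le1 le2]; have le3 := le_trans le1 le2.
  by rewrite !nv_cost_under // ler_wpM2l // lerB.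
by rewrite !nv_cost_over // ler_wpM2l // lerB.
Qed.

End newsvendor_cost.

Lemma horner_deriv_scale_sqr (R : comRingType) (c u x : R) :
  ((c *: ('X - u%:P) ^+ 2)^`()).[x] = 2 * c * (x - u).
Proof.
rewrite derivZ deriv_exp derivB derivX derivC subr0 mul1r hornerZ hornerMn.
by rewrite expr1 !hornerE -mulr_natr; ring.
Qed.

Lemma critical_ratio_itv (R : realFieldType) (h b : R) :
  0 < h -> 0 < b -> 0 <= b / (h + b) <= 1.
Proof.
move=> h_gt0 b_gt0; have hb_gt0 : 0 < h + b by rewrite addr_gt0.
apply/andP; split; first by rewrite divr_ge0 // ltW.
by rewrite ler_pdivrMr // mul1r lerDr ltW.
Qed.

Lemma convex_with1_in_itv (R : realFieldType) (theta m r : R) :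
  theta <= m <= 1 -> 0 <= r <= 1 -> theta <= m + r * (1 - m) <= 1.
Proof. by move=> /andP[tm m1] /andP[r0 r1]; apply/andP; split; nra. Qed.

Definition unif_cost (R : realType) (h b theta x : R) :=
  (h * (x - theta) ^+ 2 + b * (1 - x) ^+ 2) / (2 * (1 - theta)).

Section uniform_newsvendor.
Context (R : realType) (h b theta : R).
Hypotheses (h_gt0 : 0 < h) (b_gt0 : 0 < b) (theta_lt1 : theta < 1).
Local Notation in_support x := (theta <= x <= 1).
Local Notation rho := (b / (h + b)).
Local Notation xstar := (theta + rho * (1 - theta)).

Let w_neq0 : 1 - theta != 0. Proof. by rewrite subr_eq0 gt_eqF. Qed.
Let hb_gt0 : 0 < h + b. Proof. exact: addr_gt0. Qed.

Lemma expCost_unif x : in_support x -> expCost h b theta x = (unif_cost h b theta x)%:E.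
Proof.
move=> /[dup] xS /andP[tx x1].
rewrite /expCost (unifE_split (measurable_nv_cost h b x) xS).
set c := (1 - theta)^-1.
rewrite (@integral_itv_deriv_horner _ ((- (c * h / 2)) *: ('X - x%:P) ^+ 2)) //;
  last by move=> d /[!in_itv] /andP[_ dx]; rewrite horner_deriv_scale_sqr nv_cost_over //; field.
rewrite (@integral_itv_deriv_horner _ ((c * b / 2) *: ('X - x%:P) ^+ 2)) //;
  last by move=> d /[!in_itv] /andP[xd _]; rewrite horner_deriv_scale_sqr nv_cost_under //; field.
rewrite -EFinD /unif_cost /c !(hornerZ, horner_exp, hornerD, hornerN, hornerC, hornerX).
by congr EFin; field.
Qed.

Lemma unif_cost_sub_min y :
  unif_cost h b theta y - unif_cost h b theta xstar =
  (h + b) / (2 * (1 - theta)) * (y - xstar) ^+ 2.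
Proof. by rewrite /unif_cost; field; rewrite w_neq0 gt_eqF. Qed.

Lemma exists_expCost_le_in_support y :
  exists2 z, in_support z & (expCost h b theta z <= expCost h b theta y)%E.
Proof.
suff toward z : (forall d, in_support d -> (y <= z <= d) || (d <= z <= y)) ->
    (expCost h b theta z <= expCost h b theta y)%E.
  have [yt|ty] := ltP y theta.
    exists theta; first by rewrite lexx ltW.
    by apply: toward => d /andP[td _]; rewrite (ltW yt) td.
  have [y1|y1] := leP y 1; first by exists y; rewrite ?ty ?y1.
  exists 1; first by rewrite lexx ltW.
  by apply: toward => d /andP[_ d1]; rewrite d1 (ltW y1) orbT.
move=> zy; apply: unifE_le => // d dS; rewrite lee_fin.
  by apply: nv_cost_ge0; exact: ltW.
by apply: nv_cost_toward (zy d dS); exact: ltW.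
Qed.

Lemma optCost_unif : optCost h b theta = (unif_cost h b theta xstar)%:E.
Proof.
have xstarS : in_support xstar.
  by apply: convex_with1_in_itv; rewrite ?critical_ratio_itv // lexx ltW.
apply/le_anti/andP; split.
  by apply: ereal_inf_lbound; exists xstar; rewrite ?expCost_unif.
apply/ereal_infP => _ [y _ <-].
have [z zS /(le_trans _)] := exists_expCost_le_in_support y; apply.
rewrite expCost_unif // lee_fin -subr_ge0 unif_cost_sub_min.
by rewrite mulr_ge0 ?sqr_ge0 // divr_ge0 ?mulr_ge0 ?ltW // subr_gt0.
Qed.

Lemma expCost_sub_optCost x : in_support x ->
  (expCost h b theta x - optCost h b theta =
   ((h + b) / (2 * (1 - theta)) * (x - xstar) ^+ 2)%:E)%E.
Proof. by move=> xS; rewrite expCost_unif // optCost_unif -EFinB unif_cost_sub_min. Qed.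

End uniform_newsvendor.

(* The empty minimum is 1, the right end of the support: then
   [Num.min a (sample_min s)] with [a <= 1] is the minimum of [a] and [s]. *)
Definition sample_min (R : realType) n (s : n.-tuple R) : R :=
  \big[Num.min/1]_(x <- s) x.

Section sample_min.
Context (R : realType).

Lemma sample_min_nil (s : 0.-tuple R) : sample_min s = 1.
Proof. by rewrite tuple0 /sample_min big_nil. Qed.

Lemma sample_min_cons n x (s : n.-tuple R) :
  sample_min (cons_tuple x s) = Num.min x (sample_min s).
Proof. by rewrite /sample_min big_cons. Qed.

Lemma measurable_sample_min n : measurable_fun setT (@sample_min R n).
Proof.
rewrite /sample_min; under eq_fun do rewrite big_tuple.
elim: (index_enum _) => [|i r IH].
  by under eq_fun do rewrite big_nil; exact: measurable_cst.
under eq_fun do rewrite big_cons.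
exact: measurable_minr (measurable_tnth i) IH.
Qed.

Lemma sample_min_in_support (theta : R) n (s : n.-tuple R) : theta <= 1 ->
  tuple_in_support theta s -> theta <= sample_min s <= 1.
Proof.
move=> t1; rewrite /sample_min /tuple_in_support; elim: (tval s) => [|x l IH] /=.
  by rewrite big_nil t1 lexx.
rewrite big_cons => /andP[/andP[tx x1] /IH /andP[tm m1]].
by rewrite le_min tx tm ge_min x1.
Qed.

End sample_min.

Section min_moment.
Context (R : realType) (theta : R).
Local Notation w := (1 - theta).

(* [unif_surv] is the survival function v |-> P(d > v) of d ~ U[theta, 1], and
   [(min_moment t).[a]] = E[(min(a, d_1, ..., d_t) - theta)^2]
   = int_theta^a 2 (v - theta) (unif_surv.[v])^t dv for a in [theta, 1]. *)
Definition unif_surv : {poly R} := w^-1 *: (1 - 'X).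

Definition unif_surv_prim k : {poly R} := 'X + (w / k.+1%:R) *: unif_surv ^+ k.+1.

Definition min_moment t : {poly R} :=
  (2 * w ^+ 2) *: ((t.+1%:R)^-1 *: (1 - unif_surv ^+ t.+1)
                   - (t.+2%:R)^-1 *: (1 - unif_surv ^+ t.+2)).

Definition min_moment_prim t : {poly R} :=
  (2 * w ^+ 2) *: ((t.+1%:R)^-1 *: unif_surv_prim t.+1
                   - (t.+2%:R)^-1 *: unif_surv_prim t.+2).

Hypothesis theta_lt1 : theta < 1.
Let w_neq0 : w != 0. Proof. by rewrite subr_eq0 gt_eqF. Qed.

Lemma deriv_unif_surv_prim k : (unif_surv_prim k)^`() = 1 - unif_surv ^+ k.
Proof.
rewrite derivD derivX derivZ deriv_exp /unif_surv derivZ derivB derivC derivX sub0r.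
rewrite -scalerAl mulN1r scalerN mulNrn scalerN -(scaler_nat k.+1 (w^-1 *: _)) !scalerA.
suff -> : w / k.+1%:R * (k.+1%:R * w^-1) = 1 by rewrite scale1r.
by field; rewrite w_neq0 addrC natr1 pnatr_eq0.
Qed.

Lemma deriv_min_moment_prim t : (min_moment_prim t)^`() = min_moment t.
Proof. by rewrite !(derivZ, derivB) !deriv_unif_surv_prim. Qed.

Lemma horner_unif_surv x : unif_surv.[x] = w^-1 * (1 - x).
Proof. by rewrite /unif_surv hornerZ hornerD hornerN hornerX hornerC. Qed.

Lemma horner_min_moment t x : (min_moment t).[x] =
  2 * w ^+ 2 * ((1 - unif_surv.[x] ^+ t.+1) / t.+1%:R
                - (1 - unif_surv.[x] ^+ t.+2) / t.+2%:R).
Proof.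
rewrite /min_moment !(hornerZ, hornerD, hornerN, horner_exp) hornerC.
by rewrite !(mulrC (_^-1)).
Qed.

Lemma horner_min_moment_prim t x : (min_moment_prim t).[x] =
  2 * w ^+ 2 * ((x + w / t.+2%:R * unif_surv.[x] ^+ t.+2) / t.+1%:R
                - (x + w / t.+3%:R * unif_surv.[x] ^+ t.+3) / t.+2%:R).
Proof.
rewrite /min_moment_prim /unif_surv_prim.
rewrite !(hornerZ, hornerD, hornerN, horner_exp) hornerX.
by rewrite !(mulrC (_^-1)).
Qed.

Lemma min_moment0 x : (min_moment 0).[x] = (x - theta) ^+ 2.
Proof. by rewrite horner_min_moment horner_unif_surv expr1 divr1; field. Qed.

Lemma min_moment_at1 t :
  (min_moment t).[1] = 2 * w ^+ 2 * ((t.+1%:R)^-1 - (t.+2%:R)^-1).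
Proof. by rewrite horner_min_moment horner_unif_surv subrr mulr0 !expr0n !subr0 !div1r. Qed.

Lemma min_moment_rec t a :
  w^-1 * ((min_moment_prim t).[a] - (min_moment_prim t).[theta]
          + (min_moment t).[a] * (1 - a)) = (min_moment t.+1).[a].
Proof.
rewrite !horner_min_moment !horner_min_moment_prim.
have -> : unif_surv.[theta] = 1 by rewrite horner_unif_surv mulVf.
have ha : a = 1 - w * unif_surv.[a] by rewrite horner_unif_surv; field.
move: ha; set r := unif_surv.[a] => ha; clearbody r; subst a.
rewrite !exprS expr1n; set u := r ^+ t.
have t_ge0 : 0 <= t%:R :> R := ler0n _ _.
by field; rewrite w_neq0 andbT; apply/and3P; split; rewrite gt_eqF //; lra.
Qed.

End min_moment.

Definition min_policy (R : realType) (rho : R) : policy R :=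
  fun t s => sample_min s + rho * (1 - sample_min s).
Arguments min_policy {R} rho t s.

Lemma admissible_min_policy (R : realType) (rho : R) : admissible (min_policy rho).
Proof.
move=> t; apply: measurable_funD; first exact: measurable_sample_min.
by apply: measurable_funM => //; apply: measurable_funB => //; exact: measurable_sample_min.
Qed.

Section min_policy_regret.
Context (R : realType) (h b theta : R).
Hypotheses (h_gt0 : 0 < h) (b_gt0 : 0 < b) (theta_lt1 : theta < 1).
Local Notation rho := (b / (h + b)).

Lemma iidE_min_sq_le (K : R) t a : 0 <= K -> theta <= a <= 1 ->
  (iidE theta (fun s : t.-tuple R => (K * (Num.min a (sample_min s) - theta) ^+ 2)%:E)
   <= (K * (min_moment theta t).[a])%:E)%E.
Proof.
move=> K_ge0; elim: t a => [|t IH] a /[dup] aS /andP[ta a1] /=.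
  by rewrite sample_min_nil min_l // min_moment0.
under eq_fun do under eq_fun do rewrite sample_min_cons minA.
pose P : {poly R} := K *: min_moment_prim theta t.
have P'E x : (P^`()).[x] = K * (min_moment theta t).[x].
  by rewrite /P derivZ deriv_min_moment_prim // hornerZ.
apply: (@le_trans _ _ (unifE theta (fun x => ((P^`()).[Num.min a x])%:E))).
  apply: unifE_le => // x /andP[tx x1].
    by apply: iidE_ge0 => // s _; rewrite lee_fin mulr_ge0 ?sqr_ge0.
  by rewrite P'E; apply: IH; rewrite le_min ta tx ge_min a1.
rewrite unifE_horner_min // P'E /P !(hornerZ K) -min_moment_rec // lee_fin.
by rewrite le_eqVlt; apply/orP; left; apply/eqP; ring.
Qed.

Lemma min_policy_period_regret t :
  (iidE theta (fun s : t.-tuple R =>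
     expCost h b theta (min_policy rho t s) - optCost h b theta)
   <= ((h + b) * (1 - rho) ^+ 2 * (1 - theta) * ((t.+1%:R)^-1 - (t.+2%:R)^-1))%:E)%E.
Proof.
have w_gt0 : 0 < 1 - theta by rewrite subr_gt0.
have hb_gt0 : 0 < h + b by rewrite addr_gt0.
pose K := (h + b) * (1 - rho) ^+ 2 / (2 * (1 - theta)).
have K_ge0 : 0 <= K.
  by apply: divr_ge0; rewrite mulr_ge0 ?sqr_ge0 // ltW.
have regretE s : tuple_in_support theta s ->
    (expCost h b theta (min_policy rho t s) - optCost h b theta =
     (K * (Num.min 1 (sample_min s) - theta) ^+ 2)%:E)%E.
  move=> /(sample_min_in_support (ltW theta_lt1)) /[dup] mS /andP[_ m1].
  rewrite /min_policy expCost_sub_optCost //; last first.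
    by apply: convex_with1_in_itv; rewrite ?critical_ratio_itv.
  by rewrite min_r // /K; congr EFin; field; rewrite !gt_eqF.
apply: (@le_trans _ _ (iidE theta (fun s : t.-tuple R =>
    (K * (Num.min 1 (sample_min s) - theta) ^+ 2)%:E))).
  apply: (iidE_le theta_lt1) => s sS; rewrite regretE //.
  by rewrite lee_fin mulr_ge0 ?sqr_ge0.
apply: le_trans (iidE_min_sq_le _ K_ge0 _) _; first by rewrite lexx ltW.
rewrite min_moment_at1 // lee_fin /K; set z := _^-1 - _^-1.
by rewrite le_eqVlt; apply/orP; left; apply/eqP; field; rewrite !gt_eqF.
Qed.

Lemma regret_min_policy T : 0 <= theta ->
  (regret h b (min_policy rho) theta T <= ((h + b) * (1 - rho) ^+ 2 / 2)%:E)%E.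
Proof.
move=> theta_ge0; rewrite /regret.
apply: le_trans (lee_sum _ (fun t _ => min_policy_period_regret t)) _.
rewrite sumEFin lee_fin -mulr_sumr.
have -> : \sum_(1 <= t < T.+1) ((t.+1%:R)^-1 - (t.+2%:R)^-1) = 2^-1 - (T.+2%:R)^-1 :> R.
  rewrite -[RHS]opprB -(@telescope_sumr _ 1 T.+1 (fun k => (k.+1%:R)^-1)) // -sumrN.
  by apply: eq_bigr => k _; rewrite opprB.
have c_ge0 : 0 <= (h + b) * (1 - rho) ^+ 2 by rewrite mulr_ge0 ?sqr_ge0 // ltW ?addr_gt0.
have e_ge0 : 0 <= (T.+2%:R : R)^-1 by rewrite invr_ge0.
move: c_ge0 e_ge0; set c := _ * _; set e := _^-1 => c_ge0 e_ge0.
have we_ge0 : 0 <= (1 - theta) * e by rewrite mulr_ge0 // subr_ge0 ltW.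
by rewrite -mulrA ler_wpM2l //; lra.
Qed.

End min_policy_regret.

Theorem theoremD2 (R : realType) (h b : R) (T : nat) :
  0 < h -> 0 < b -> (1 <= T)%N ->
  let rho := b / (h + b) in
  (minimax_regret h b T <= ((rho ^+ 2 + (1 - rho) ^+ 2) * (h + b))%:E)%E.
Proof.
move=> h_gt0 b_gt0 _ /=; set rho := b / (h + b).
apply: (@le_trans _ _ (worst_regret h b (min_policy rho) T)).
  by apply: ereal_inf_lbound; exists (min_policy rho); first exact: admissible_min_policy.
apply: ge_ereal_sup => _ [theta + <-]; rewrite /= in_itv /= => /andP[theta_ge0 theta_le].
have theta_lt1 : theta < 1 by apply: le_lt_trans theta_le _; rewrite invf_lt1 ?ltr1n.
apply: le_trans (regret_min_policy h_gt0 b_gt0 theta_lt1 T theta_ge0) _.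
have hb_gt0 : 0 < h + b by rewrite addr_gt0.
rewrite lee_fin -/rho.
have := sqr_ge0 rho; have := sqr_ge0 (1 - rho); nra.
Qed.
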